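(* Let $N\geq 1$, let $\mathbb{A},\widetilde{\mathbb{A}}$ be real antisymmetric $N\times N$ matrices and $\mathbb{D}$ a real diagonal $N\times N$ matrix, and let $A$ be the $2N\times 2N$ complex antisymmetric matrix $$A=P^T\begin{pmatrix}\mathbb{A} & i\mathbb{D}\\ -i\mathbb{D} & \widetilde{\mathbb{A}}\end{pmatrix}P,$$ where $P$ is the permutation matrix with $P(x_1,y_1,x_2,y_2,\dots,x_N,y_N)^T=(x_1,\dots,x_N,y_1,\dots,y_N)^T$. Assume $A$ is diagonalizable and has no zero eigenvalue, and write its eigenvalues as $\pm\beta_1,\dots,\pm\beta_N$, where each $\beta_k$ is chosen with $\mathrm{Re}\,\beta_k\geq 0$, and with $\mathrm{Im}\,\beta_k>0$ whenever $\mathrm{Re}\,\beta_k=0$. Let $|\mathfrak{I}|$ be the number of $k$ with $\beta_k$ purely imaginary. Let $O$ be a complex orthogonal $2N\times 2N$ matrix ($OO^T=O^TO=\mathbb{1}$) with $A=O^TBO$, where $B$ is block diagonal with $2\times 2$ blocks $\begin{pmatrix}0&-i\beta_k\\ i\beta_k&0\end{pmatrix}$, $k=1,\dots,N$. Let $c_1,\tilde c_1,\dots,c_N,\tilde c_N$ be Hermitian operators on a Hilbert space satisfying $\{c_i,c_j\}=\{\tilde c_i,\tilde c_j\}=2\delta_{ij}$, $\{c_i,\tilde c_j\}=0$; set $\vec c=(c_1,\tilde c_1,\dots,c_N,\tilde c_N)^T$, $\vec a=(a_1,\dots,a_{2N})^T=O\vec c$, and define $(-1)^{\mathcal{N}_f}=\prod_{j=1}^N(-i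 c_j\tilde c_j)$ and $(-1)^{\mathcal{N}_d}=\prod_{k=1}^N(-i a_{2k-1}a_{2k})$. Fix an integer $m\geq 0$ (in the paper $m=|\mathfrak{U}|+|\mathfrak{V}|$, the number of intralayer plus interlayer gauge flips), and call a nonzero state $|\psi\rangle$ physical if $(-1)^{\mathcal{N}_f}|\psi\rangle=(-1)^m|\psi\rangle$. Then a nonzero state $|\bm{\nu}\rangle$ with $(-1)^{\mathcal{N}_d}|\bm{\nu}\rangle=(-1)^{\nu}|\bm{\nu}\rangle$ (where $\nu$ is the total number of occupied normal master modes) is physical if and only if $$(-1)^\nu=(\det O)\,(-1)^{m}.$$ Moreover, $\det O=\mathrm{sgn}\big((-i)^{|\mathfrak{I}|}\,\mathrm{Pf}(iA)\big)$, where $\mathrm{Pf}$ denotes the Pfaffian.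
   Context: This is the single-particle (third-quantization) description of a quadratic Majorana Lindbladian $\mathcal{L}=\tfrac14\vec c^{\,T}A\vec c-\sum_j\gamma_j$, with $\mathbb{A}_{ij}=4J_{ij}u_{ij}$, $\widetilde{\mathbb{A}}_{ij}=4J_{ij}\tilde u_{ij}$, $\mathbb{D}_{ij}=2\delta_{ij}\gamma_iv_i$ for classical $\mathbb{Z}_2$ gauge fields $u_{ij},\tilde u_{ij},v_i\in\{\pm1\}$. Normal master modes are $d'_k=\tfrac12(a_{2k-1}-ia_{2k})$, $d_k=\tfrac12(a_{2k-1}+ia_{2k})$, with eigenstates $|\bm\nu\rangle=\prod_k(d'_k)^{\nu_k}|\Omega\rangle$, $\nu_k\in\{0,1\}$, $\nu=\sum_k\nu_k$, where $|\Omega\rangle$ is annihilated by all $d_k$. Physicality means the adjoint-fermion parity $(-1)^{\mathcal{N}_f}$ equals the gauge parity, which in the sector with $|\mathfrak{U}|$ intralayer and $|\mathfrak{V}|$ interlayer gauge flips is $(-1)^{|\mathfrak{U}|+|\mathfrak{V}|}$. *)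

(* Scalars: an arbitrary numClosedFieldType C (e.g. complex R
   for a real closed field R, or algC); "real" means \is Num.real. *)
From HB Require Import structures.
From mathcomp Require Import all_boot all_order all_fingroup all_algebra.
Set Implicit Arguments. Unset Strict Implicit. Unset Printing Implicit Defensive.
Import Order.TTheory GRing.Theory Num.Theory.
Local Open Scope ring_scope.

Lemma half_ord_proof N (i : 'I_N.*2) : (i./2 < N)%N.
Proof. have := ltn_ord i; rewrite -{1}(odd_double_half i) => h.
by rewrite -ltn_double; apply: leq_ltn_trans h; apply: leq_addl. Qed.
Definition half_ord N (i : 'I_N.*2) : 'I_N := Ordinal (half_ord_proof i).

Lemma evn_proof N (k : 'I_N) : (k.*2 < N.*2)%N.
Proof. by rewrite ltn_double. Qed.
Lemma odn_proof N (k : 'I_N) : (k.*2.+1 < N.*2)%N.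
Proof. by rewrite -doubleS leq_double. Qed.
(* 0-based positions 2k and 2k+1, i.e. the paper's 1-based 2k-1 and 2k *)
Definition evn N (k : 'I_N) : 'I_N.*2 := Ordinal (evn_proof k).
Definition odn N (k : 'I_N) : 'I_N.*2 := Ordinal (odn_proof k).

(* sigma : block coordinates (x_1..x_N,y_1..y_N) -> interleaved (x_1,y_1,...) *)
Definition ilv N (a : 'I_(N + N)) : 'I_N.*2 :=
  match split a with inl k => evn k | inr k => odn k end.

Definition Pmx (C : nzRingType) N : 'M[C]_(N + N, N.*2) :=
  \matrix_(a, i) (i == ilv a)%:R.

Definition Amx (C : numClosedFieldType) N (AA AAt DD : 'M[C]_N) : 'M[C]_N.*2 :=
  (Pmx C N)^T *m block_mx AA ('i *: DD) (- ('i *: DD)) AAt *m Pmx C N.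

Definition Bmx (C : numClosedFieldType) N (b : 'I_N -> C) : 'M[C]_N.*2 :=
  \matrix_(i, j)
    if half_ord i == half_ord j then
      (if ~~ odd i && odd j then - ('i * b (half_ord i))
       else if odd i && ~~ odd j then 'i * b (half_ord i) else 0)
    else 0.

Definition pfaffian (C : fieldType) n (A : 'M[C]_n.*2) : C :=
  ((2 ^ n * n`!)%:R)^-1 *
  \sum_(s : 'S_n.*2) (-1) ^+ s * \prod_(k < n) A (s (evn k)) (s (odn k)).

Definition oprod (C : nzRingType) (V : lmodType C) N (F : 'I_N -> V -> V) : V -> V :=
  foldr (fun k g => F k \o g) id (enum 'I_N).

Definition cvec (C : nzRingType) (V : lmodType C) N (c ct : 'I_N -> V -> V)
  (i : 'I_N.*2) : V -> V :=
  if odd i then ct (half_ord i) else c (half_ord i).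

Definition avec (C : nzRingType) (V : lmodType C) N (O : 'M[C]_N.*2)
  (c ct : 'I_N -> V -> V) (k : 'I_N.*2) : V -> V :=
  fun v => \sum_(j < N.*2) O k j *: cvec c ct j v.

Definition parity_f (C : numClosedFieldType) (V : lmodType C) N
  (c ct : 'I_N -> V -> V) : V -> V :=
  oprod (fun j v => (- 'i) *: c j (ct j v)).

Definition parity_d (C : numClosedFieldType) (V : lmodType C) N (O : 'M[C]_N.*2)
  (c ct : 'I_N -> V -> V) : V -> V :=
  oprod (fun k v => (- 'i) *: avec O c ct (evn k) (avec O c ct (odn k) v)).

Definition physical (C : numClosedFieldType) (V : lmodType C) N
  (c ct : 'I_N -> V -> V) (m : nat) (psi : V) : Prop :=
  psi != 0 /\ parity_f c ct psi = (-1) ^+ m *: psi.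

(* In pair order, (-1)^{N_d} and (-1)^{N_f} are (-i)^N times the products
   a_1 ... a_2N and c_1 ... c_2N of the Majorana operators, where a = O c.  As O is
   orthogonal, the a_k satisfy the same Clifford relations as the c_k, so both products
   are alternating under permutations; antisymmetrizing a_1 ... a_2N and expanding it
   multilinearly yields a_1 ... a_2N = det O c_1 ... c_2N.  Hence
   (-1)^{N_d} = det O (-1)^{N_f}, and det O = +-1 gives the physicality criterion.

   For the sign of det O, Pf (M^T X M) = det M Pf X turns A = O^T B O into
   Pf (iA) = det O Pf (iB), and Pf (iB) is a positive multiple of prod_k beta_k.  The
   matrix A is conjugate to its complex conjugate by diag (1, -1, 1, ...), so its
   characteristic polynomial is real: the beta_k with positive real part are closed
   under conjugation and have a positive product, while each purely imaginary beta_k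
   contributes -i beta_k = Im beta_k > 0.  So (-i)^|I| Pf (iA) is det O times a positive
   real number. *)

From HB Require Import structures.
From mathcomp Require Import all_boot all_order all_fingroup all_algebra.
From mathcomp Require Import boolp ring.
Set Implicit Arguments. Unset Strict Implicit. Unset Printing Implicit Defensive.
Import Order.TTheory GRing.Theory Num.Theory.
Local Open Scope ring_scope.

(** * Interleaved indices *)

Lemma index_enumE (T : finType) : index_enum T = enum T.
Proof. by rewrite [index_enum T]unlock enumT. Qed.

Section Interleaving.
Variable n : nat.
Implicit Types (k l : 'I_n) (i j : 'I_n.*2).

Lemma odd_evn k : odd (evn k) = false. Proof. by rewrite /= odd_double. Qed.
Lemma odd_odn k : odd (odn k). Proof. by rewrite /= odd_double. Qed.
Lemma half_evn k : half_ord (evn k) = k. Proof. by apply: val_inj; rewrite /= doubleK. Qed.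
Lemma half_odn k : half_ord (odn k) = k.
Proof. by apply: val_inj; exact: (half_bit_double k true). Qed.

Lemma evn_half i : ~~ odd i -> evn (half_ord i) = i.
Proof. by move=> /negbTE ei; apply: val_inj; rewrite /= -{2}(odd_double_half i) ei. Qed.
Lemma odn_half i : odd i -> odn (half_ord i) = i.
Proof. by move=> oi; apply: val_inj; rewrite /= -{2}(odd_double_half i) oi. Qed.

Lemma evn_inj : injective (@evn n).
Proof. by move=> k l /(congr1 val) /double_inj kl; apply: val_inj. Qed.
Lemma odn_inj : injective (@odn n).
Proof. by move=> k l /(congr1 val) [] /double_inj kl; apply: val_inj. Qed.
Lemma evn_neq_odn k l : evn k != odn l.
Proof. by apply: contraTneq isT => /(congr1 (odd \o val)); rewrite /= !odd_double. Qed.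

Lemma eq_half_ord i j : odd i = odd j -> (half_ord i == half_ord j) = (i == j).
Proof.
move=> oij; apply/eqP/eqP => [hij|-> //]; apply: val_inj.
by rewrite /= -(odd_double_half i) -(odd_double_half j) oij -[i./2]/(val (half_ord i)) hij.
Qed.

Lemma odd_half_partner i j : half_ord i = half_ord j -> i != j -> odd j = ~~ odd i.
Proof.
move=> hij; have [oij|] := eqVneq (odd i) (odd j).
  by rewrite -(eq_half_ord oij) hij eqxx.
by case: (odd i); case: (odd j).
Qed.

Lemma tperm_pair_evn k l : l != k -> tperm (evn k) (odn k) (evn l) = evn l.
Proof. by move=> lk; rewrite tpermD // eq_sym ?(inj_eq evn_inj) ?evn_neq_odn. Qed.
Lemma tperm_pair_odn k l : l != k -> tperm (evn k) (odn k) (odn l) = odn l.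
Proof. by move=> lk; rewrite tpermD // ?evn_neq_odn // eq_sym (inj_eq odn_inj). Qed.

Lemma enum_pairs : flatten [seq [:: evn k; odn k] | k <- enum 'I_n] = enum 'I_n.*2.
Proof.
apply: (inj_map val_inj); rewrite val_enum_ord map_flatten.
have -> : map (map val) [seq [:: evn k; odn k] | k <- enum 'I_n] =
          [seq [:: x.*2; x.*2.+1] | x <- map val (enum 'I_n)] by rewrite -!map_comp.
rewrite val_enum_ord; elim: n => // m IH.
by rewrite doubleS -addn2 -addn1 !iotaD map_cat flatten_cat IH.
Qed.

Lemma big_pairs R idx (op : Monoid.law idx) (F : 'I_n.*2 -> R) :
  \big[op/idx]_i F i = \big[op/idx]_(k < n) op (F (evn k)) (F (odn k)).
Proof.
rewrite [in LHS]index_enumE -enum_pairs big_flatten big_map [in RHS]index_enumE /=.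
by apply: eq_bigr => k _; rewrite !big_cons big_nil Monoid.mulm1.
Qed.
End Interleaving.
Arguments evn_inj {n}.
Arguments odn_inj {n}.

(** * Anticommuting elements and Clifford generators *)

Definition anticommuting (R : pzRingType) (I : eqType) (e : I -> R) :=
  forall i j, i != j -> e i * e j = - (e j * e i).

Section AnticommutingProducts.
Variables (R : pzRingType) (I : finType) (e : I -> R).
Hypothesis e_anti : anticommuting e.

Lemma mul_prod_anticomm x r : x \notin r ->
  e x * \prod_(j <- r) e j = (-1) ^+ size r * (\prod_(j <- r) e j * e x).
Proof.
elim: r => [|y r IH]; first by rewrite big_nil mulr1 mul1r expr0 mul1r.
rewrite in_cons negb_or => /andP[xy xr]; rewrite big_cons mulrA e_anti //.
rewrite mulNr -mulrA IH // /= exprS mulN1r mulNr; congr (- _).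
by rewrite !mulrA (commr_sign (e y)).
Qed.

Lemma prod_mul_anticomm x r : x \notin r ->
  \prod_(j <- r) e j * e x = (-1) ^+ size r * (e x * \prod_(j <- r) e j).
Proof. by move=> xr; rewrite mul_prod_anticomm // mulrA -expr2 sqrr_sign mul1r. Qed.

Lemma prod_swap_anticomm x y m r : x != y -> x \notin m -> y \notin m ->
  \prod_(j <- y :: m ++ x :: r) e j = - \prod_(j <- x :: m ++ y :: r) e j.
Proof.
move=> xy xm ym; rewrite !big_cons !big_cat !big_cons /=.
rewrite ![_ * (e _ * _)]mulrA !prod_mul_anticomm // !mulrA !(commr_sign (e _)).
rewrite -(mulrA _ (e y)) e_anti; last by rewrite eq_sym.
by rewrite mulrN !mulNr !mulrA.
Qed.

Lemma prod_tperm_anticomm x y r : uniq r -> x != y -> x \in r -> y \in r ->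
  \prod_(j <- map (tperm x y) r) e j = - \prod_(j <- r) e j.
Proof.
wlog: x y r / exists a m b, r = a ++ x :: m ++ y :: b.
  move=> ordered ur xy xr yr; case/splitPr: xr ur yr => a r' ur.
  rewrite mem_cat in_cons eq_sym (negbTE xy) /= => /orP[ya | yr].
    case/splitPr: ya ur => a1 m ur; rewrite tpermC; rewrite eq_sym in xy.
    apply: ordered; rewrite ?(mem_cat, inE, eqxx, orbT) //.
    by exists a1, m, r'; rewrite -catA.
  case/splitPr: yr ur => m b ur.
  by apply: ordered; rewrite ?(mem_cat, inE, eqxx, orbT) //; exists a, m, b.
case=> a [m [b ->]] ur xy _ _.
have := ur; rewrite (uniq_catCA a [:: x]) /= !(mem_cat, in_cons, negb_or).
case/andP=> /and4P[xa xm _ xb]; rewrite catA (uniq_catCA _ [:: y]) /= !(mem_cat, negb_or).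
case/andP=> /andP[/andP[ya ym] yb] _.
have tperm_id s : x \notin s -> y \notin s -> map (tperm x y) s = s.
  move=> xs ys; rewrite -[RHS]map_id; apply/eq_in_map => z zs.
  by rewrite tpermD //; [apply: contraNneq xs => -> | apply: contraNneq ys => ->].
rewrite map_cat /= map_cat /= tpermL tpermR !tperm_id // !big_cat /=.
by rewrite prod_swap_anticomm // mulrN.
Qed.

End AnticommutingProducts.

Lemma prod_perm_anticomm (R : pzRingType) (I : finType) (e : I -> R) (s : {perm I}) :
  anticommuting e -> \prod_i e (s i) = (-1) ^+ s * \prod_i e i.
Proof.
move=> e_anti; have [ts -> dts] := prod_tpermP s; elim: ts dts => [_|t ts IH] /=.
  by rewrite big_nil odd_perm1 mul1r; apply: eq_bigr => i _; rewrite perm1.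
case/andP=> t12 dts; rewrite big_cons; set s' := (\prod_(t <- ts) _)%g.
have s'_anti : anticommuting (e \o s').
  by move=> i j ij; rewrite /= e_anti // (inj_eq perm_inj).
rewrite (eq_bigr (fun i => (e \o s') (tperm t.1 t.2 i))) => [|i _]; last by rewrite permM.
rewrite -(big_map _ xpredT (e \o s')) index_enumE prod_tperm_anticomm ?enum_uniq ?mem_enum //.
by rewrite -index_enumE IH // odd_mul_tperm t12 signr_addb expr1 mulN1r mulNr.
Qed.

Lemma sum_ffun_det (R : comPzRingType) (W : lmodType R) n (X : 'M[R]_n)
    (G : {ffun 'I_n -> 'I_n} -> W) :
  \sum_(f : {ffun 'I_n -> 'I_n}) \det (\matrix_(i, j) X (f i) j) *: G f =
  \sum_(s : 'S_n) ((-1) ^+ s * \det X) *: G (pval s).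
Proof.
rewrite (bigID (fun f : {ffun 'I_n -> 'I_n} => injectiveb f)) /= addrC big1 ?add0r.
  rewrite (reindex (@pval _)) /=; last first.
    by exists (insubd (1%g : 'S_n)) => [s _ | f f_inj]; [exact: valKd | exact: insubdK].
  apply: eq_big => [s | s _]; first by rewrite (valP s).
  have -> : \matrix_(i, j) X (pval s i) j = row_perm s X.
    by apply/matrixP => i j; rewrite !mxE pvalE.
  by rewrite row_permE det_mulmx det_perm.
move=> f /injectivePn[i1 [i2 i12 f12]].
by rewrite (determinant_alternate i12) ?scale0r // => j; rewrite !mxE f12.
Qed.

Lemma sum_ffun_detM (R : comPzRingType) n (X : 'M[R]_n) (G : {ffun 'I_n -> 'I_n} -> R) :
  \sum_(f : {ffun 'I_n -> 'I_n}) \det (\matrix_(i, j) X (f i) j) * G f =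
  \sum_(s : 'S_n) ((-1) ^+ s * \det X) * G (pval s).
Proof. exact: (sum_ffun_det (W := R^o)). Qed.

Lemma orthogonal_det_sqr (R : comNzRingType) n (O : 'M[R]_n) :
  O *m O^T = 1%:M -> \det O * \det O = 1.
Proof. by move/(congr1 determinant); rewrite det_mulmx det_tr det1. Qed.

Lemma mulr_signZ (R : pzRingType) (A : lalgType R) (b : bool) (x : A) :
  (-1) ^+ b * x = (-1) ^+ b *: x.
Proof. by rewrite mulr_sign scaler_sign. Qed.

Section CliffordGenerators.
Variables (R : comPzRingType) (A : algType R) (n : nat).
Implicit Types (e : 'I_n -> A) (O : 'M[R]_n).

Definition clifford e := forall i j, e i * e j + e j * e i = (2 * (i == j)%:R)%:A.

Lemma clifford_anticomm e : clifford e -> anticommuting e.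
Proof.
by move=> ce i j /negbTE ij; apply/eqP; rewrite -addr_eq0 ce ij mulr0 scale0r.
Qed.

Lemma clifford_orthogonal e O : clifford e -> O *m O^T = 1%:M ->
  clifford (fun i => \sum_j O i j *: e j).
Proof.
move=> ce OOt i j.
have expand k l : (\sum_p O k p *: e p) * (\sum_q O l q *: e q) =
    \sum_p \sum_q (O k p * O l q) *: (e p * e q).
  rewrite mulr_suml; apply: eq_bigr => p _; rewrite mulr_sumr; apply: eq_bigr => q _.
  by rewrite -scalerAl -scalerAr scalerA.
rewrite !expand [X in _ + X]exchange_big -big_split /=.
transitivity (\sum_p (O i p * O j p * 2)%:A : A).
  apply: eq_bigr => p _; rewrite -big_split (bigD1 p) //= big1 ?addr0 => [|q qp].
    by rewrite (mulrC (O j p)) -scalerDr ce eqxx mulr1 scalerA.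
  by rewrite (mulrC (O j q)) -scalerDr ce eq_sym (negbTE qp) mulr0 !scale0r scaler0.
rewrite -scaler_suml -mulr_suml; congr (_ *: _).
have -> : \sum_p O i p * O j p = (O *m O^T) i j by rewrite !mxE; apply: eq_bigr => p _; rewrite mxE.
by rewrite OOt mxE mulrC.
Qed.
End CliffordGenerators.

Lemma prod_clifford_orthogonal (R : numFieldType) (A : algType R) n
    (e : 'I_n -> A) (O : 'M[R]_n) :
  clifford e -> O *m O^T = 1%:M ->
  \prod_i (\sum_j O i j *: e j) = \det O *: \prod_i e i.
Proof.
move=> ce OOt.
(* n! a_1...a_n is the antisymmetrization of a_1...a_n; expanding it, the coefficient
   of e_(f 1)...e_(f n) is a determinant of rows of O^T, which vanishes unless f is a
   permutation. *)
have fact_neq0 : (n`!)%:R != 0 :> R by rewrite pnatr_eq0 -lt0n fact_gt0.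
apply: (scalerI fact_neq0).
have sign_sq (s : 'S_n) : (-1) ^+ s * (-1) ^+ s = 1 :> R by rewrite -expr2 sqrr_sign.
have antisym : (n`!)%:R *: \prod_i (\sum_j O i j *: e j) =
    \sum_(s : 'S_n) (-1) ^+ s *: \prod_i (\sum_j O (s i) j *: e j).
  rewrite -card_Sn -sumr_const scaler_suml; apply: eq_bigr => s _.
  rewrite (prod_perm_anticomm _ (clifford_anticomm (clifford_orthogonal ce OOt))).
  by rewrite mulr_signZ scalerA sign_sq.
have expand (s : 'S_n) : (-1) ^+ s *: \prod_i (\sum_j O (s i) j *: e j) =
    \sum_(f : {ffun 'I_n -> 'I_n}) ((-1) ^+ s * \prod_i O (s i) (f i)) *: \prod_i e (f i).
  rewrite bigA_distr_bigA scaler_sumr; apply: eq_bigr => f _.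
  by rewrite scaler_prod scalerA.
rewrite antisym (eq_bigr _ (fun s _ => expand s)) exchange_big /=.
transitivity (\sum_(f : {ffun 'I_n -> 'I_n})
                \det (\matrix_(i, j) O^T (f i) j) *: \prod_i e (f i)).
  apply: eq_bigr => f _; rewrite /(\det _) scaler_suml; apply: eq_bigr => s _.
  by congr (_ * _ *: _); apply: eq_bigr => i _; rewrite !mxE.
rewrite sum_ffun_det det_tr -card_Sn -sumr_const scaler_suml; apply: eq_bigr => s _.
rewrite (eq_bigr (fun i => e (s i))) => [|i _]; last by rewrite pvalE.
rewrite (prod_perm_anticomm _ (clifford_anticomm ce)) mulr_signZ scalerA mulrAC.
by rewrite sign_sq mul1r scale1r.
Qed.

(** * Linear operators on a module *)

Section Endomorphisms.
Variables (R : comNzRingType) (V : lmodType R).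

Record endo := Endo { endo_fun :> V -> V; endo_linear : linear endo_fun }.

HB.instance Definition _ (f : endo) := GRing.isLinear.Build R V V *:%R f (endo_linear f).
HB.instance Definition _ := gen_eqMixin endo.
HB.instance Definition _ := gen_choiceMixin endo.

Lemma endoP (f g : endo) : f =1 g -> f = g.
Proof.
by case: f g => f fL [g gL] /= /funext fg; subst g; congr Endo; exact: Prop_irrelevance.
Qed.

Fact zero_linear : linear (fun _ : V => 0 : V).
Proof. by move=> a u v; rewrite scaler0 addr0. Qed.
Fact add_linear (f g : endo) : linear (fun v => f v + g v).
Proof. by move=> a u v; rewrite !linearP scalerDr addrACA. Qed.
Fact opp_linear (f : endo) : linear (fun v => - f v).
Proof. by move=> a u v; rewrite linearP opprD scalerN. Qed.
Fact scale_linear a (f : endo) : linear (fun v => a *: f v).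
Proof. by move=> b u v; rewrite linearP scalerDr !scalerA mulrC. Qed.
Fact comp_linear (f g : endo) : linear (f \o g).
Proof. by move=> a u v /=; rewrite !linearP. Qed.
Fact id_linear : linear (@id V). Proof. by []. Qed.

Definition endo_add f g := Endo (add_linear f g).
Definition endo_opp f := Endo (opp_linear f).
Definition endo_scale a f := Endo (scale_linear a f).
Definition endo_mul f g := Endo (comp_linear f g).

Fact endo_addA : associative endo_add.
Proof. by move=> f g h; apply: endoP => v /=; rewrite addrA. Qed.
Fact endo_addC : commutative endo_add.
Proof. by move=> f g; apply: endoP => v /=; rewrite addrC. Qed.
Fact endo_add0 : left_id (Endo zero_linear) endo_add.
Proof. by move=> f; apply: endoP => v /=; rewrite add0r. Qed.
Fact endo_addN : left_inverse (Endo zero_linear) endo_opp endo_add.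
Proof. by move=> f; apply: endoP => v /=; rewrite addNr. Qed.
HB.instance Definition _ :=
  GRing.isZmodule.Build endo endo_addA endo_addC endo_add0 endo_addN.

Fact endo_scaleA a b f : endo_scale a (endo_scale b f) = endo_scale (a * b) f.
Proof. by apply: endoP => v /=; rewrite scalerA. Qed.
Fact endo_scale1 : left_id 1 endo_scale.
Proof. by move=> f; apply: endoP => v /=; rewrite scale1r. Qed.
Fact endo_scaleDr : right_distributive endo_scale +%R.
Proof. by move=> a f g; apply: endoP => v /=; rewrite scalerDr. Qed.
Fact endo_scaleDl f : {morph endo_scale^~ f : a b / a + b}.
Proof. by move=> a b; apply: endoP => v /=; rewrite scalerDl. Qed.
HB.instance Definition _ :=
  GRing.Zmodule_isLmodule.Build R endo endo_scaleA endo_scale1 endo_scaleDr endo_scaleDl.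

Fact endo_mulA : associative endo_mul. Proof. by move=> f g h; apply: endoP. Qed.
Fact endo_mul1 : left_id (Endo id_linear) endo_mul. Proof. by move=> f; apply: endoP. Qed.
Fact endo_mulr1 : right_id (Endo id_linear) endo_mul. Proof. by move=> f; apply: endoP. Qed.
Fact endo_mulDl : left_distributive endo_mul +%R. Proof. by move=> f g h; apply: endoP. Qed.
Fact endo_mulDr : right_distributive endo_mul +%R.
Proof. by move=> f g h; apply: endoP => v /=; rewrite linearD. Qed.
Fact endo_scaleAl a (f g : endo) : a *: endo_mul f g = endo_mul (a *: f) g.
Proof. by apply: endoP. Qed.
Fact endo_scaleAr a (f g : endo) : a *: endo_mul f g = endo_mul f (a *: g).
Proof. by apply: endoP => v /=; rewrite linearZ. Qed.

Lemma sum_endoE I r (P : pred I) (F : I -> endo) v :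
  (\sum_(i <- r | P i) F i) v = \sum_(i <- r | P i) F i v.
Proof. by elim/big_rec2: _ => // i f w _ <-. Qed.

End Endomorphisms.

Definition lincomb_ops (R : nzRingType) (V : lmodType R) m (O : 'M[R]_m)
  (e : 'I_m -> V -> V) (i : 'I_m) (v : V) : V := \sum_j O i j *: e j v.

(* [endo V] is a nonzero ring only when [V] is nonzero; [oprod_orthogonal_clifford]
   below handles the zero vector separately. *)
Section OrthogonalCliffordOperators.
Variables (R : numFieldType) (V : lmodType R) (v0 : V) (v0_neq0 : v0 != 0).

Fact endo_one_neq0 : Endo (@id_linear _ V) != 0.
Proof. by apply: contra v0_neq0 => /eqP /(congr1 (fun f : endo V => f v0)) /= ->. Qed.
HB.instance Definition _ := GRing.Zmodule_isNzRing.Build (endo V)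
  (@endo_mulA _ V) (@endo_mul1 _ V) (@endo_mulr1 _ V) (@endo_mulDl _ V) (@endo_mulDr _ V)
  endo_one_neq0.
HB.instance Definition _ := GRing.Lmodule_isLalgebra.Build R (endo V) (@endo_scaleAl _ V).
HB.instance Definition _ := GRing.Lalgebra_isAlgebra.Build R (endo V) (@endo_scaleAr _ V).

Lemma oprod_pairsE n (E : 'I_n.*2 -> endo V) a (F : 'I_n -> V -> V) :
  (forall k v, F k v = a *: E (evn k) (E (odn k) v)) -> oprod F =1 a ^+ n *: \prod_i E i.
Proof.
move=> FE v; have -> : a ^+ n *: \prod_i E i = \prod_k (a *: (E (evn k) * E (odn k))).
  by rewrite scaler_prod prodr_const card_ord big_pairs.
rewrite /oprod !index_enumE.
by elim: (enum 'I_n) => [|k r IH]; rewrite ?big_nil ?big_cons //= FE IH.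
Qed.

Lemma oprod_orthogonal_clifford_nz n (e : 'I_n.*2 -> V -> V) (O : 'M[R]_n.*2) a
    (F G : 'I_n -> V -> V) (v : V) :
  (forall i, linear (e i)) ->
  (forall i j v, e i (e j v) + e j (e i v) = (2 * (i == j)%:R) *: v) ->
  O *m O^T = 1%:M ->
  (forall k v, F k v = a *: e (evn k) (e (odn k) v)) ->
  (forall k v, G k v = a *: lincomb_ops O e (evn k) (lincomb_ops O e (odn k) v)) ->
  oprod G v = \det O *: oprod F v.
Proof.
move=> e_lin e_cl OOt FE GE; pose E i := Endo (e_lin i).
have E_cl : clifford E by move=> i j; apply: endoP => w /=; rewrite e_cl.
pose M i := \sum_j O i j *: E j.
have ME i w : M i w = lincomb_ops O e i w by rewrite sum_endoE.
rewrite (oprod_pairsE (E := E) FE) (oprod_pairsE (E := M) (a := a)) => [|k w]; last first.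
  by rewrite !ME GE.
by rewrite prod_clifford_orthogonal //= scalerA mulrC -scalerA.
Qed.
End OrthogonalCliffordOperators.

Lemma oprod0 (R : nzRingType) (V : lmodType R) n (F : 'I_n -> V -> V) :
  (forall k, F k 0 = 0) -> oprod F 0 = 0.
Proof. by move=> F0; rewrite /oprod; elim: (enum 'I_n) => //= k r ->. Qed.

Lemma oprod_orthogonal_clifford (R : numFieldType) (V : lmodType R) n
    (e : 'I_n.*2 -> V -> V) (O : 'M[R]_n.*2) a (F G : 'I_n -> V -> V) (v : V) :
  (forall i, linear (e i)) ->
  (forall i j v, e i (e j v) + e j (e i v) = (2 * (i == j)%:R) *: v) ->
  O *m O^T = 1%:M ->
  (forall k v, F k v = a *: e (evn k) (e (odn k) v)) ->
  (forall k v, G k v = a *: lincomb_ops O e (evn k) (lincomb_ops O e (odn k) v)) ->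
  oprod G v = \det O *: oprod F v.
Proof.
move=> e_lin e_cl OOt FE GE; have [->|v_neq0] := eqVneq v 0; last first.
  exact: (oprod_orthogonal_clifford_nz v_neq0).
have e0 i : e i 0 = 0 by exact: linear0 (Endo (e_lin i)).
have mix0 i : lincomb_ops O e i 0 = 0 by rewrite /lincomb_ops big1 // => j _; rewrite e0 scaler0.
by rewrite !oprod0 ?scaler0 // => k; rewrite ?FE ?GE ?mix0 ?e0 scaler0.
Qed.

Section FermionParity.
Variables (C : numClosedFieldType) (V : lmodType C) (N : nat) (c ct : 'I_N -> V -> V).
Hypotheses (c_lin : forall j, linear (c j)) (ct_lin : forall j, linear (ct j)).
Hypothesis c_cl : forall i j v, c i (c j v) + c j (c i v) = (2 * (i == j)%:R) *: v.
Hypothesis ct_cl : forall i j v, ct i (ct j v) + ct j (ct i v) = (2 * (i == j)%:R) *: v.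
Hypothesis c_ct_anti : forall i j v, c i (ct j v) + ct j (c i v) = 0.

Lemma cvec_linear i : linear (cvec c ct i).
Proof. by rewrite /cvec; case: (odd i). Qed.

Lemma cvec_clifford i j v :
  cvec c ct i (cvec c ct j v) + cvec c ct j (cvec c ct i v) = (2 * (i == j)%:R) *: v.
Proof.
have [oij|oij] := eqVneq (odd i) (odd j).
  by rewrite /cvec -oij -(eq_half_ord oij); case: (odd i); rewrite ?ct_cl ?c_cl.
have /negbTE ij : i != j by apply: contraNneq oij => ->.
rewrite /cvec ij mulr0 scale0r; move: oij.
by case: (odd i); case: (odd j) => //= _; rewrite 1?addrC c_ct_anti.
Qed.

Lemma parity_d_det O v : O *m O^T = 1%:M -> parity_d O c ct v = \det O *: parity_f c ct v.
Proof.
move=> OOt; apply: (oprod_orthogonal_clifford (e := cvec c ct)) => //.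
- exact: cvec_linear.
- exact: cvec_clifford.
- by move=> k w; rewrite /cvec odd_evn odd_odn half_evn half_odn.
Qed.

Lemma physical_iff O m nu psi : O *m O^T = 1%:M -> psi != 0 ->
  parity_d O c ct psi = (-1) ^+ nu *: psi ->
  physical c ct m psi <-> (-1) ^+ nu = \det O * (-1) ^+ m.
Proof.
move=> OOt psi_neq0 d_psi.
have detO2 := orthogonal_det_sqr OOt.
have f_psi : parity_f c ct psi = (\det O * (-1) ^+ nu) *: psi.
  by rewrite -scalerA -d_psi parity_d_det // scalerA detO2 scale1r.
have scale_psi a b : a *: psi = b *: psi -> a = b.
  move/eqP; rewrite -subr_eq0 -scalerBl scaler_eq0 (negbTE psi_neq0) orbF subr_eq0.
  by move/eqP.
by rewrite /physical f_psi; split => [[_ /scale_psi <-] | ->]; rewrite mulrA detO2 mul1r.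
Qed.
End FermionParity.

(** * Pfaffians *)

Section PfaffianSum.
Variables (R : comPzRingType) (n : nat).
Implicit Types (X M : 'M[R]_n.*2) (s : 'S_n.*2).

Definition pf_term X s := (-1) ^+ s * \prod_(k < n) X (s (evn k)) (s (odn k)).
Definition pf_sum X := \sum_s pf_term X s.

Lemma prod_congr_pairs M X (s : 'I_n.*2 -> 'I_n.*2) :
  \prod_(k < n) (M^T *m X *m M) (s (evn k)) (s (odn k)) =
  \sum_(f : {ffun 'I_n.*2 -> 'I_n.*2})
    (\prod_i M (f i) (s i)) * \prod_(k < n) X (f (evn k)) (f (odn k)).
Proof.
pose P k (pq : 'I_n.*2 * 'I_n.*2) := M pq.1 (s (evn k)) * X pq.1 pq.2 * M pq.2 (s (odn k)).
have entry k : (M^T *m X *m M) (s (evn k)) (s (odn k)) = \sum_pq P k pq.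
  rewrite mxE -(pair_bigA _ (fun p q => P k (p, q))) exchange_big /=; apply: eq_bigr => q _.
  by rewrite mxE big_distrl; apply: eq_bigr => p _; rewrite !mxE.
rewrite (eq_bigr _ (fun k _ => entry k)) bigA_distr_bigA /=.
pose pairs (f : {ffun 'I_n.*2 -> 'I_n.*2}) := [ffun k => (f (evn k), f (odn k))].
have pairs_bij : {on [pred g | true], bijective pairs}.
  exists (fun g : {ffun 'I_n -> _} =>
            [ffun i : 'I_n.*2 => if odd i then (g (half_ord i)).2 else (g (half_ord i)).1])
    => [f _ | g _]; apply/ffunP; [move=> i | move=> k]; rewrite !ffunE.
    by case: ifP => oi /=; rewrite ?odn_half ?evn_half ?oi.
  by rewrite (odd_evn k) (odd_odn k) half_evn half_odn; case: (g k).
rewrite (reindex pairs pairs_bij); apply: eq_bigr => f _.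
rewrite big_pairs -big_split /=; apply: eq_bigr => k _; rewrite !ffunE /=.
by rewrite /P /=; ring.
Qed.
Lemma pf_sum_congr M X : pf_sum (M^T *m X *m M) = \det M * pf_sum X.
Proof.
rewrite /pf_sum /pf_term; under eq_bigr do rewrite prod_congr_pairs mulr_sumr.
rewrite exchange_big /=.
transitivity (\sum_(f : {ffun 'I_n.*2 -> 'I_n.*2})
    \det (\matrix_(i, j) M (f i) j) * \prod_(k < n) X (f (evn k)) (f (odn k))).
  apply: eq_bigr => f _; rewrite /(\det _) mulr_suml; apply: eq_bigr => s _.
  by rewrite mulrA; congr (_ * _ * _); apply: eq_bigr => i _; rewrite mxE.
rewrite sum_ffun_detM mulr_sumr; apply: eq_bigr => s _.
by rewrite mulrCA mulrA; congr (_ * _); apply: eq_bigr => k _; rewrite !pvalE.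
Qed.
End PfaffianSum.

Lemma pfaffianE (F : fieldType) n (X : 'M[F]_n.*2) :
  pfaffian X = ((2 ^ n * n`!)%:R)^-1 * pf_sum X.
Proof. by []. Qed.

Section PairPermutations.
Variable n : nat.
Implicit Types (s : 'S_n) (i j : 'I_n.*2).

Definition pairs_fun s i : 'I_n.*2 :=
  if odd i then odn (s (half_ord i)) else evn (s (half_ord i)).

Lemma pairs_fun_inj s : injective (pairs_fun s).
Proof.
move=> i j; rewrite /pairs_fun; case oi: (odd i); case oj: (odd j) => h.
- by apply/eqP; rewrite -eq_half_ord ?oi ?oj //; rewrite (perm_inj (odn_inj _ _ h)).
- by move: (evn_neq_odn (s (half_ord j)) (s (half_ord i))); rewrite h eqxx.
- by move: (evn_neq_odn (s (half_ord i)) (s (half_ord j))); rewrite h eqxx.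
- by apply/eqP; rewrite -eq_half_ord ?oi ?oj //; rewrite (perm_inj (evn_inj _ _ h)).
Qed.

Definition pairs_perm s : 'S_n.*2 := perm (@pairs_fun_inj s).

Lemma pairs_perm_evn s k : pairs_perm s (evn k) = evn (s k).
Proof. by rewrite permE /pairs_fun odd_evn half_evn. Qed.
Lemma pairs_perm_odn s k : pairs_perm s (odn k) = odn (s k).
Proof. by rewrite permE /pairs_fun odd_odn half_odn. Qed.

Lemma pairs_permM s1 s2 : pairs_perm (s1 * s2) = (pairs_perm s1 * pairs_perm s2)%g.
Proof.
apply/permP => i; rewrite permM !permE /pairs_fun !permM.
by case: (odd i); rewrite ?odd_odn ?odd_evn ?half_odn ?half_evn.
Qed.

Lemma pairs_perm_tperm a b :
  pairs_perm (tperm a b) = (tperm (evn a) (evn b) * tperm (odn a) (odn b))%g.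
Proof.
apply/permP => i; rewrite permM permE /pairs_fun.
case oi: (odd i).
- rewrite -[in RHS](odn_half oi) (tpermD (evn_neq_odn _ _) (evn_neq_odn _ _)).
  by rewrite -(inj_tperm _ _ _ odn_inj).
- rewrite -[in RHS](evn_half (negbT oi)) -(inj_tperm _ _ _ evn_inj).
  by rewrite [tperm (odn a) _ _]tpermD // eq_sym evn_neq_odn.
Qed.

Lemma odd_pairs_perm s : odd_perm (pairs_perm s) = false.
Proof.
have [ts -> _] := prod_tpermP s; elim: ts => [|t ts IH].
  rewrite big_nil; have -> : pairs_perm 1 = 1%g.
    apply/permP => i; rewrite permE /pairs_fun !perm1.
    by case: ifP => oi; rewrite ?odn_half ?evn_half ?oi.
  exact: odd_perm1.
rewrite big_cons pairs_permM odd_permM IH pairs_perm_tperm odd_permM !odd_tperm.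
by rewrite !(inj_eq evn_inj) !(inj_eq odn_inj) addbb.
Qed.
End PairPermutations.

Section PfaffianTerms.
Variables (R : comPzRingType) (n : nat).
Implicit Types (X : 'M[R]_n.*2) (s : 'S_n.*2).

Lemma pf_term_pairs_perm X (sigma : 'S_n) s :
  pf_term X (pairs_perm sigma * s) = pf_term X s.
Proof.
rewrite /pf_term odd_permM odd_pairs_perm /=.
congr (_ * _); rewrite [RHS](reindex_inj (@perm_inj _ sigma)); apply: eq_bigr => k _.
by rewrite !permM pairs_perm_evn pairs_perm_odn.
Qed.

Lemma pf_term_pairs_perm1 X (sigma : 'S_n) :
  pf_term X (pairs_perm sigma) = \prod_k X (evn k) (odn k).
Proof.
rewrite -[pairs_perm _]mulg1 pf_term_pairs_perm /pf_term odd_perm1 mul1r.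
by apply: eq_bigr => k _; rewrite !perm1.
Qed.

Lemma pf_term_swap X s k : (forall i j, X j i = - X i j) ->
  pf_term X (tperm (evn k) (odn k) * s) = pf_term X s.
Proof.
move=> X_anti; rewrite /pf_term odd_mul_tperm evn_neq_odn addTb signrN mulNr.
rewrite (bigD1 k) //= [in RHS](bigD1 k) //= !permM tpermL tpermR.
rewrite X_anti mulNr mulrN opprK; congr (_ * (_ * _)); apply: eq_bigr => l lk.
by rewrite !permM tperm_pair_evn ?tperm_pair_odn.
Qed.
End PfaffianTerms.

Definition pair_preserving n (s : 'S_n.*2) :=
  [forall k, half_ord (s (evn k)) == half_ord (s (odn k))].

Lemma pair_preserving_odd_odn n (s : 'S_n.*2) k :
  pair_preserving s -> odd (s (odn k)) = ~~ odd (s (evn k)).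
Proof.
move/forallP/(_ k)/eqP => hk; apply: odd_half_partner hk _.
by rewrite (inj_eq perm_inj) evn_neq_odn.
Qed.

Lemma pair_preserving_even n (s : 'S_n.*2) :
  pair_preserving s -> (forall k, ~~ odd (s (evn k))) -> exists sigma, s = pairs_perm sigma.
Proof.
move=> pps even_s; pose sigma k := half_ord (s (evn k)).
have sigma_inj : injective sigma.
  move=> k l /eqP; rewrite eq_half_ord ?(negbTE (even_s _)) //.
  by rewrite (inj_eq perm_inj) (inj_eq evn_inj) => /eqP.
exists (perm sigma_inj); apply/permP => i; have [oi|ei] := boolP (odd i).
  rewrite -(odn_half oi); move: (half_ord i) => k.
  rewrite pairs_perm_odn permE /sigma; have /forallP/(_ k)/eqP -> := pps.
  by rewrite odn_half // pair_preserving_odd_odn // even_s.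
by rewrite -(evn_half ei); move: (half_ord i) => k; rewrite pairs_perm_evn permE /sigma evn_half.
Qed.

Section PairBlockPfaffian.
Variables (R : comPzRingType) (n : nat) (Z : 'M[R]_n.*2).
Hypothesis Z_anti : forall i j, Z j i = - Z i j.
Hypothesis Z_block : forall i j, half_ord i != half_ord j -> Z i j = 0.

Lemma pf_term_block_pp s : pair_preserving s -> pf_term Z s = \prod_k Z (evn k) (odn k).
Proof.
(* Induction on the number of pairs whose two entries [s] reverses. *)
move: {2}#|[set k | odd (s (evn k))]| (leqnn #|[set k | odd (s (evn k))]|) => m.
elim: m s => [|m IH] s odd_s pps.
  have even_s k : ~~ odd (s (evn k)).
    by move: odd_s; rewrite leqn0 => /eqP/card0_eq/(_ k); rewrite inE => ->.
  by have [sigma ->] := pair_preserving_even pps even_s; rewrite pf_term_pairs_perm1.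
have [k sk | /(_ _)/negbT even_s] := pickP (fun k => odd (s (evn k))); last first.
  by have [sigma ->] := pair_preserving_even pps even_s; rewrite pf_term_pairs_perm1.
rewrite -(pf_term_swap s k Z_anti); apply: IH.
- rewrite -ltnS; apply: leq_trans odd_s; rewrite [X in (_ < X)%N](cardD1 k) inE sk add1n ltnS.
  apply: subset_leq_card; apply/subsetP => l; rewrite !inE !permM.
  have [->|lk] := eqVneq l k; first by rewrite tpermL pair_preserving_odd_odn // sk.
  by rewrite tperm_pair_evn.
- apply/forallP => l; rewrite !permM.
  have [->|lk] := eqVneq l k.
    by rewrite tpermL tpermR eq_sym; move/forallP: pps => /(_ k).
  by rewrite tperm_pair_evn ?tperm_pair_odn //; move/forallP: pps => /(_ l).
Qed.
Lemma pf_term_block_npp s : ~~ pair_preserving s -> pf_term Z s = 0.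
Proof. by case/forallPn => k hk; rewrite /pf_term (bigD1 k) //= Z_block // mul0r mulr0. Qed.

Lemma pf_sum_block :
  pf_sum Z = #|[set s : 'S_n.*2 | pair_preserving s]|%:R * \prod_k Z (evn k) (odn k).
Proof.
rewrite /pf_sum (bigID (fun s => pair_preserving s)) /=.
rewrite [X in _ + X]big1 => [|s /pf_term_block_npp //].
by rewrite addr0 (eq_bigr _ (fun s pps => pf_term_block_pp pps)) sumr_const cardsE mulr_natl.
Qed.
End PairBlockPfaffian.

(** * The spectrum of A *)

Lemma char_poly_similar (R : comNzRingType) n (U W A : 'M[R]_n) :
  U *m W = 1%:M -> char_poly (U *m A *m W) = char_poly A.
Proof.
move=> UW; pose U' := map_mx polyC U; pose W' := map_mx polyC W.
have UW' : U' *m W' = 1%:M by rewrite -map_mxM UW map_scalar_mx.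
have similar : char_poly_mx (U *m A *m W) = U' *m char_poly_mx A *m W'.
  rewrite /char_poly_mx !map_mxM mulmxBr mulmxBl -/U' -/W'.
  by rewrite mul_mx_scalar -scalemxAl UW' scalemx1.
by rewrite /char_poly similar !det_mulmx mulrC mulrA -det_mulmx (mulmx1C UW') det1 mul1r.
Qed.

Section InterleavedBlocks.
Variable N : nat.

Definition unilv (i : 'I_N.*2) : 'I_(N + N) :=
  if odd i then rshift N (half_ord i) else lshift N (half_ord i).

Lemma ilv_unilv i : ilv (unilv i) = i.
Proof.
rewrite /unilv /ilv; case: ifP => oi.
  by rewrite (unsplitK (inr _) : split _ = _) odn_half ?oi.
by rewrite (unsplitK (inl _) : split _ = _) evn_half ?oi.
Qed.
Lemma unilv_ilv a : unilv (ilv a) = a.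
Proof.
rewrite /ilv -[in RHS](splitK a); case: (split a) => k /=.
  by rewrite /unilv odd_evn half_evn.
by rewrite /unilv odd_odn half_odn.
Qed.

Lemma Pmx_congr (C : nzRingType) (M : 'M[C]_(N + N)) :
  (Pmx C N)^T *m M *m Pmx C N = \matrix_(i, j) M (unilv i) (unilv j).
Proof.
have pick (F : 'I_(N + N) -> C) i : \sum_a F a *+ (i == ilv a) = F (unilv i).
  rewrite (eq_bigr (fun a => if a == unilv i then F a else 0)) => [|a _].
    by rewrite -big_mkcond big_pred1_eq.
  by rewrite -mulrb -(can_eq ilv_unilv) unilv_ilv eq_sym.
apply/matrixP => i j; rewrite !mxE -pick; apply: eq_bigr => b _.
rewrite !mxE mulr_natr -(pick (fun a => M a b)); congr (_ *+ _); apply: eq_bigr => a _.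
by rewrite !mxE mulr_natl.
Qed.
End InterleavedBlocks.

Section AmxReal.
Variables (C : numClosedFieldType) (N : nat) (AA AAt DD : 'M[C]_N).
Hypotheses (AA_real : forall i j, AA i j \is Num.real)
  (AAt_real : forall i j, AAt i j \is Num.real) (DD_real : forall i j, DD i j \is Num.real).

Definition parity_signs : 'rV[C]_N.*2 := \row_i (-1) ^+ odd i.

Lemma AmxE : Amx AA AAt DD = \matrix_(i, j)
  let k := half_ord i in let l := half_ord j in
  if odd i then (if odd j then AAt k l else - ('i * DD k l))
  else (if odd j then 'i * DD k l else AA k l).
Proof.
apply/matrixP => i j; rewrite /Amx Pmx_congr [LHS]mxE [RHS]mxE /unilv.
by case: (odd i); case: (odd j);
  rewrite ?block_mxEul ?block_mxEur ?block_mxEdl ?block_mxEdr ?mxE.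
Qed.

Lemma conj_Amx : map_mx Num.conj (Amx AA AAt DD) =
  diag_mx parity_signs *m Amx AA AAt DD *m diag_mx parity_signs.
Proof.
rewrite AmxE; apply/matrixP => i j; rewrite mul_mx_diag mul_diag_mx !mxE.
case: (odd i); case: (odd j); rewrite /= ?expr0 ?expr1.
- by rewrite conj_Creal // mulN1r mulrN1 opprK.
- by rewrite rmorphN rmorphM /= conjCi conj_Creal // mulN1r mulr1 mulNr.
- by rewrite rmorphM /= conjCi conj_Creal // mul1r mulrN1 mulNr.
- by rewrite conj_Creal // mul1r mulr1.
Qed.

Lemma char_poly_Amx_conj :
  map_poly Num.conj (char_poly (Amx AA AAt DD)) = char_poly (Amx AA AAt DD).
Proof.
rewrite map_char_poly conj_Amx char_poly_similar //.
by rewrite mulmx_diag; apply/matrixP => i j; rewrite !mxE -expr2 sqrr_sign.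
Qed.
End AmxReal.

Lemma prod_conj_closed_gt0 (C : numClosedFieldType) (r : seq C) :
  all (fun z => 0 < 'Re z) r -> perm_eq (map Num.conj r) r -> 0 < \prod_(z <- r) z.
Proof.
move: {2}(size r) (leqnn (size r)) => m.
elim: m r => [|m IH] [|x r] //=; rewrite ?big_nil ?ltr01 //.
move=> size_r /andP[x_pos r_pos] conj_r; rewrite big_cons.
have [x_real | x_nreal] := eqVneq x^* x.
  have /Creal_ReP <- : x \is Num.real by rewrite CrealE x_real.
  by apply: mulr_gt0 => //; apply: IH => //; move: conj_r; rewrite /= x_real perm_cons.
have xc_r : x^* \in r.
  have : x^* \in map Num.conj (x :: r) by rewrite map_f ?mem_head.
  by rewrite (perm_mem conj_r) in_cons (negbTE x_nreal).
have r_rem := perm_to_rem xc_r; set r' := rem x^* r in r_rem.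
rewrite (perm_big _ r_rem) big_cons mulrA; apply: mulr_gt0.
  rewrite mul_conjC_gt0; apply: contraTneq x_pos => ->.
  by rewrite (ReE 0) rmorph0 addr0 mul0r ltxx.
apply: IH.
- by move: size_r; rewrite (perm_size r_rem) /= ltnS => /ltnW.
- by apply/allP => z z_r'; apply: (allP r_pos); rewrite (perm_mem r_rem) in_cons z_r' orbT.
- have conj_rem : perm_eq (x^* :: map Num.conj r) (x^* :: x :: map Num.conj r').
    by rewrite perm_cons; have := perm_map Num.conj r_rem; rewrite /= conjCK.
  have swap : perm_eq (x :: r) (x^* :: x :: r').
    by apply: perm_trans (permEl (perm_catCA [:: x] [:: x^*] r')); rewrite perm_cons.
  rewrite perm_sym in conj_rem.
  by have := perm_trans (perm_trans conj_rem conj_r) swap; rewrite !perm_cons.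
Qed.

Section HalfSpectrum.
Variables (C : numClosedFieldType) (N : nat) (beta : 'I_N -> C) (A : 'M[C]_N.*2).
Hypothesis char_real : map_poly Num.conj (char_poly A) = char_poly A.
Hypothesis char_beta :
  char_poly A = \prod_(k < N) (('X - (beta k)%:P) * ('X + (beta k)%:P)).
Hypothesis beta_Re : forall k, 0 <= 'Re (beta k).
Hypothesis beta_Im : forall k, 'Re (beta k) = 0 -> 0 < 'Im (beta k).

Let spectrum := map beta (index_enum 'I_N) ++ map (fun k => - beta k) (index_enum 'I_N).
Let right_spectrum := map beta [seq k <- index_enum 'I_N | 'Re (beta k) != 0].

Lemma perm_conj_spectrum : perm_eq (map Num.conj spectrum) spectrum.
Proof.
have char_spec : char_poly A = \prod_(z <- spectrum) ('X - z%:P).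
  rewrite char_beta big_split /= big_cat /= !big_map; congr (_ * _).
  by apply: eq_bigr => k _; rewrite polyCN opprK.
apply: prod_XsubC_eq; rewrite -char_spec -[in RHS]char_real char_spec.
by rewrite map_prod_XsubC big_map.
Qed.

Lemma perm_conj_right_spectrum : perm_eq (map Num.conj right_spectrum) right_spectrum.
Proof.
have right_spec : filter (fun z => 0 < 'Re z) spectrum = right_spectrum.
  rewrite filter_cat [X in _ ++ X](_ : _ = [::]) ?cats0.
    by rewrite filter_map; congr map; apply: eq_filter => k /=; rewrite lt0r beta_Re andbT.
  apply/eqP; rewrite -[_ == _]negbK -has_filter; apply/hasPn => _ /mapP[k _ ->].
  by rewrite raddfN oppr_gt0; apply/negP => /(le_lt_trans (beta_Re k)); rewrite ltxx.
rewrite -right_spec; have := perm_filter (fun z => 0 < 'Re z) perm_conj_spectrum.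
by rewrite filter_map (eq_filter (a2 := fun z => 0 < 'Re z)) // => z; rewrite /= Re_conj.
Qed.

Lemma prod_beta_gt0 :
  0 < (- 'i) ^+ #|[set k : 'I_N | 'Re (beta k) == 0]| * \prod_k beta k.
Proof.
rewrite (bigID (fun k => 'Re (beta k) == 0)) /= mulrA.
have -> : (- 'i) ^+ #|[set k : 'I_N | 'Re (beta k) == 0]| =
          \prod_(k | 'Re (beta k) == 0) (- 'i : C).
  by rewrite -prodr_const; apply: eq_bigl => k; rewrite inE.
rewrite -big_split /=; apply: mulr_gt0.
  apply: prodr_gt0 => k /eqP Re0.
  by rewrite {1}(Crect (beta k)) Re0 add0r mulrA mulNr -expr2 sqrCi opprK mul1r beta_Im.
rewrite -big_filter -(big_map beta predT id) prod_conj_closed_gt0 ?perm_conj_right_spectrum //.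
by apply/allP => z /mapP[k]; rewrite mem_filter => /andP[Re_k _] ->; rewrite lt0r Re_k beta_Re.
Qed.
End HalfSpectrum.

Lemma pf_sum_iBmx (C : numClosedFieldType) N (beta : 'I_N -> C) :
  pf_sum ('i *: Bmx beta) = #|[set s : 'S_N.*2 | pair_preserving s]|%:R * \prod_k beta k.
Proof.
rewrite pf_sum_block => [|i j|i j]; rewrite ?mxE.
- congr (_ * _); apply: eq_bigr => k _; rewrite !mxE half_evn half_odn eqxx odd_evn odd_odn /=.
  by rewrite mulrN mulrA -expr2 sqrCi mulN1r opprK.
- rewrite eq_sym; case: eqP => [->|_]; last by rewrite !mulr0 oppr0.
  by case: (odd i); case: (odd j); rewrite /= ?mulr0 ?oppr0 ?mulrN ?opprK.
- by move/negbTE ->; rewrite mulr0.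
Qed.

Lemma orthogonal_det_sign (C : numClosedFieldType) N (AA AAt DD : 'M[C]_N)
  (beta : 'I_N -> C) (O : 'M[C]_N.*2) :
  (forall i j, AA i j \is Num.real) -> (forall i j, AAt i j \is Num.real) ->
  (forall i j, DD i j \is Num.real) ->
  char_poly (Amx AA AAt DD) = \prod_(k < N) (('X - (beta k)%:P) * ('X + (beta k)%:P)) ->
  (forall k, 0 <= 'Re (beta k)) -> (forall k, 'Re (beta k) = 0 -> 0 < 'Im (beta k)) ->
  O *m O^T = 1%:M -> Amx AA AAt DD = O^T *m Bmx beta *m O ->
  let x := (- 'i) ^+ #|[set k : 'I_N | 'Re (beta k) == 0]| * pfaffian ('i *: Amx AA AAt DD) in
  x \is Num.real /\ \det O = Num.sg x.
Proof.
move=> AA_real AAt_real DD_real char_beta beta_Re beta_Im OOt AOB x.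
have y_gt0 := prod_beta_gt0 (char_poly_Amx_conj AA_real AAt_real DD_real)
  char_beta beta_Re beta_Im.
set y := _ * \prod_k beta k in y_gt0.
set K := #|[set s : 'S_N.*2 | pair_preserving s]|.
have K_gt0 : (0 < K)%N.
  apply/card_gt0P; exists 1%g; rewrite inE.
  by apply/forallP => k; rewrite !perm1 half_evn half_odn.
have c_gt0 : 0 < ((2 ^ N * N`!)%:R)^-1 * K%:R :> C.
  by rewrite mulr_gt0 ?invr_gt0 ?ltr0n ?muln_gt0 ?expn_gt0 ?fact_gt0.
have -> : x = \det O * (((2 ^ N * N`!)%:R)^-1 * K%:R * y).
  by rewrite /x pfaffianE AOB scalemxAl scalemxAr pf_sum_congr pf_sum_iBmx /y; ring.
move: (mulr_gt0 c_gt0 y_gt0); move: (_ * y) => z z_gt0.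
have z_lt0 : - z < 0 by rewrite oppr_lt0.
have /orP[] : (\det O == 1) || (\det O == -1).
  by rewrite -sqrf_eq1 expr2 orthogonal_det_sqr.
- by move/eqP ->; rewrite mul1r (gtr0_sg z_gt0) (gtr0_real z_gt0).
- by move/eqP ->; rewrite mulN1r (ltr0_sg z_lt0) rpredN (gtr0_real z_gt0).
Qed.

Unset Implicit Arguments.
Theorem mainTheorem1
  (C : numClosedFieldType) (N : nat) (hN : (1 <= N)%N)
  (AA AAt DD : 'M[C]_N)
  (hAAreal : forall i j, AA i j \is Num.real)
  (hAAtreal : forall i j, AAt i j \is Num.real)
  (hDDreal : forall i j, DD i j \is Num.real)
  (hAAanti : AA^T = - AA) (hAAtanti : AAt^T = - AAt)
  (hDDdiag : is_diag_mx DD)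
  (hdiag : diagonalizable (Amx AA AAt DD))
  (hnz : ~~ root (char_poly (Amx AA AAt DD)) 0)
  (beta : 'I_N -> C)
  (hchar : char_poly (Amx AA AAt DD) =
           \prod_(k < N) (('X - (beta k)%:P) * ('X + (beta k)%:P)))
  (hbetaRe : forall k, 0 <= 'Re (beta k))
  (hbetaIm : forall k, 'Re (beta k) = 0 -> 0 < 'Im (beta k))
  (O : 'M[C]_N.*2)
  (hO1 : O *m O^T = 1%:M) (hO2 : O^T *m O = 1%:M)
  (hAOB : Amx AA AAt DD = O^T *m Bmx beta *m O)
  (V : lmodType C) (form : V -> V -> C)
  (hform_lin : forall a u v w, form u (a *: v + w) = a * form u v + form u w)
  (hform_herm : forall u v, form v u = (form u v)^*)
  (hform_pos : forall v, v != 0 -> 0 < form v v)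
  (c ct : 'I_N -> V -> V)
  (hc_lin : forall j, linear (c j)) (hct_lin : forall j, linear (ct j))
  (hc_herm : forall j u v, form (c j u) v = form u (c j v))
  (hct_herm : forall j u v, form (ct j u) v = form u (ct j v))
  (hcc : forall i j v, c i (c j v) + c j (c i v) = (2 * (i == j)%:R) *: v)
  (hctct : forall i j v, ct i (ct j v) + ct j (ct i v) = (2 * (i == j)%:R) *: v)
  (hcct : forall i j v, c i (ct j v) + ct j (c i v) = 0)
  (m : nat) :
  (forall (nu : nat) (psi : V), psi != 0 ->
     parity_d O c ct psi = (-1) ^+ nu *: psi ->
     (physical c ct m psi <-> (-1) ^+ nu = \det O * (-1) ^+ m))
  /\
  (let I := #|[set k : 'I_N | 'Re (beta k) == 0]| in
   let x := (- 'i) ^+ I * pfaffian ('i *: Amx AA AAt DD) in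
   x \is Num.real /\ \det O = Num.sg x).
Proof.
split; first by move=> nu psi psi_neq0; apply: physical_iff.
exact: orthogonal_det_sign.
Qed.
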